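(* Let $\alpha\in(0,1]$ and $a,b\in\mathbb{R}$ with $0\le a<b$. Let $f:[a,b]\to[0,\infty)$ and $g:[a,b]\to[0,1]$ be $\alpha$-fractional integrable on $[a,b]$, with $f$ decreasing. Let $$ \ell:=\frac{\alpha(b-a)}{b^\alpha-a^\alpha}\int_a^b g(t)\,d_\alpha t. $$ Then $$ \int_{b-\ell}^b f(t)\,d_\alpha t\le\int_a^b f(t)g(t)\,d_\alpha t\le\int_a^{a+\ell}f(t)\,d_\alpha t. $$
   Context: For $\alpha\in(0,1]$ and $0\le a<b$, $\int_a^b f(t)\,d_\alpha t:=\int_a^b f(t)\,t^{\alpha-1}\,dt$, and $f$ is called $\alpha$-fractional integrable on $[a,b]$ if this integral exists and is finite. *)

From HB Require Import structures.
From mathcomp Require Import all_boot all_order all_algebra.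
From mathcomp Require Import all_classical all_reals all_analysis.
Set Implicit Arguments. Unset Strict Implicit. Unset Printing Implicit Defensive.
Import Order.TTheory GRing.Theory Num.Theory.
Import numFieldNormedType.Exports.
Local Open Scope classical_set_scope.
Local Open Scope ring_scope.

Definition frac_integrand {R : realType} (alpha : R) (f : R -> R) (t : R) : R :=
  f t * t `^ (alpha - 1).

Definition frac_integrable {R : realType} (alpha a b : R) (f : R -> R) : Prop :=
  (@lebesgue_measure R).-integrable `[a, b]
     (fun t => (frac_integrand alpha f t)%:E).

Definition frac_int {R : realType} (alpha a b : R) (f : R -> R) : R :=
  Rintegral (@lebesgue_measure R) `[a, b] (frac_integrand alpha f).

From HB Require Import structures.
From mathcomp Require Import all_boot all_order all_algebra.
From mathcomp Require Import all_classical all_reals all_analysis.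
From mathcomp Require Import ring lra.
From mathcomp Require Import measurable_realfun.
Set Implicit Arguments. Unset Strict Implicit. Unset Printing Implicit Defensive.
Import Order.TTheory GRing.Theory Num.Theory.
Import numFieldNormedType.Exports.
Local Open Scope classical_set_scope.
Local Open Scope ring_scope.

(* A Steffensen inequality for the weight w t = t^(alpha-1).  Writing
   G = int_a^b g w, for f nonincreasing and c in [a, b] the integrand f g w
   dominates f w 1_[c,b] + f c (g w - w 1_[c,b]) pointwise, so
   int_c^b f w + f c (G - int_c^b w) <= int_a^b f g w, and symmetrically on
   [a, c].  Since int_x^y w = (y^alpha - x^alpha)/alpha, the concavity of
   t^alpha gives int_(b-l)^b w <= G <= int_a^(a+l) w for the length l of the
   statement, so the correction terms f c (...) have the right sign. *)

Section powR_facts.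
Variable R : realType.
Implicit Types al p s t u v : R.

Lemma powR_derivable_oo_LRcontinuous al u v : 0 < al -> 0 <= u -> u < v ->
  derivable_oo_LRcontinuous (@powR R ^~ al) u v.
Proof.
move=> al0 u0 uv; split.
- move=> t; rewrite in_itv/= => /andP[ut _]; apply: derivable_powR.
  by rewrite in_itv/= andbT; exact: le_lt_trans u0 ut.
- move: u0; rewrite le_eqVlt => /predU1P[<-|u0].
    by rewrite powR0 ?gt_eqF//; exact: powR_cvg0.
  apply: cvg_at_right_filter.
  have := @derivable_powR R 1 al u; rewrite in_itv/= andbT => /(_ u0).
  by move/derivable1_diffP/differentiable_continuous.
- apply: cvg_at_left_filter.
  have := @derivable_powR R 1 al v; rewrite in_itv/= andbT.
  move=> /(_ (le_lt_trans u0 uv)).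
  by move/derivable1_diffP/differentiable_continuous.
Qed.

Lemma le0_ger_powR p s t : p <= 0 -> 0 < s -> s <= t -> t `^ p <= s `^ p.
Proof.
move=> p0 s0 st; have t0 := lt_le_trans s0 st.
rewrite -[p]opprK [t `^ _]powRN [s `^ _]powRN lef_pV2 ?posrE ?powR_gt0//.
by apply: ge0_ler_powR => //; rewrite ?oppr_ge0 ?nnegrE ?(ltW s0) ?(ltW t0).
Qed.

(* Concavity of [powR ^~ al]: by the mean value theorem, the slope on [[a, c]]
   dominates the slope on [[c, b]]. *)
Lemma powR_secant_le al a c b : 0 < al -> al <= 1 ->
  0 <= a -> a <= c -> c <= b ->
  (c - a) * (b `^ al - a `^ al) <= (c `^ al - a `^ al) * (b - a).
Proof.
move=> al0 al1 a0; rewrite le_eqVlt => /predU1P[<-|ac].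
  by rewrite !subrr !mul0r.
rewrite le_eqVlt => /predU1P[<-|cb]; first by rewrite mulrC.
have mvt u v : 0 <= u -> u < v -> exists2 z, z \in `]u, v[ &
    v `^ al - u `^ al = al * z `^ (al - 1) * (v - u).
  move=> u0 uv; apply: (@MVT _ (@powR R ^~ al) (fun z => al * z `^ (al - 1))) => //.
    move=> z; rewrite in_itv/= => /andP[uz _]; apply: is_derive1_powR.
    exact: le_lt_trans u0 uz.
  exact/derivable_oo_LRcontinuous_within/powR_derivable_oo_LRcontinuous.
have [z1 /[!in_itv] /andP[az1 z1c] e1] := mvt a c a0 ac.
have [z2 /[!in_itv] /andP[cz2 z2b] e2] := mvt c b (le_trans a0 (ltW ac)) cb.
have z12 : 0 <= z1 `^ (al - 1) - z2 `^ (al - 1).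
  rewrite subr_ge0.
  apply: le0_ger_powR; first by rewrite subr_le0.
    exact: le_lt_trans a0 az1.
  exact/ltW/(lt_trans z1c).
have -> : b `^ al - a `^ al = (b `^ al - c `^ al) + (c `^ al - a `^ al) by ring.
rewrite e1 e2.
have k : 0 <= al * (c - a) * (b - c) by rewrite !mulr_ge0 ?subr_ge0 ?ltW.
have := mulr_ge0 z12 k; nra.
Qed.

Lemma powR_secant_ge al a c b : 0 < al -> al <= 1 ->
  0 <= a -> a <= c -> c <= b ->
  (b - a) * (b `^ al - c `^ al) <= (b - c) * (b `^ al - a `^ al).
Proof. by move=> al0 al1 a0 ac cb; have := powR_secant_le al0 al1 a0 ac cb; lra. Qed.

Lemma powR_steffensen_length al a b G : 0 < al -> al <= 1 -> 0 <= a -> a < b ->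
  0 <= G <= (b `^ al - a `^ al) / al ->
  let l := al * (b - a) / (b `^ al - a `^ al) * G in
  [/\ 0 <= l, l <= b - a, (b `^ al - (b - l) `^ al) / al <= G
     & G <= ((a + l) `^ al - a `^ al) / al].
Proof.
move=> al0 al1 a0 ab /andP[G0 GW] l.
have BA : 0 < b `^ al - a `^ al.
  by rewrite subr_gt0 gt0_ltr_powR ?nnegrE// (le_trans a0 (ltW ab)).
have ba : 0 < b - a by rewrite subr_gt0.
have Gl : G = l * (b `^ al - a `^ al) / (al * (b - a)).
  by rewrite /l; field; rewrite (gt_eqF al0) (gt_eqF BA) (gt_eqF ba).
have l0 : 0 <= l by rewrite /l !mulr_ge0 ?invr_ge0 ?(ltW al0) ?(ltW ba) ?(ltW BA).
have lba : l <= b - a.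
  move: GW; rewrite Gl ler_pdivrMr ?mulr_gt0//.
  have -> : (b `^ al - a `^ al) / al * (al * (b - a)) =
    (b - a) * (b `^ al - a `^ al) by field; rewrite gt_eqF.
  by rewrite ler_pM2r.
split => //; rewrite Gl -subr_ge0.
- have := @powR_secant_ge al a (b - l) b al0 al1 a0.
  rewrite (_ : b - (b - l) = l); last by ring.
  move=> /(_ ltac:(lra) ltac:(lra)) key.
  have -> : l * (b `^ al - a `^ al) / (al * (b - a)) - (b `^ al - (b - l) `^ al) / al =
    (l * (b `^ al - a `^ al) - (b - a) * (b `^ al - (b - l) `^ al)) / (al * (b - a)).
    by field; rewrite (gt_eqF al0) (gt_eqF ba).
  by rewrite divr_ge0 ?subr_ge0 ?mulr_ge0 ?(ltW al0) ?(ltW ba).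
- have := @powR_secant_le al a (a + l) b al0 al1 a0.
  rewrite (_ : a + l - a = l); last by ring.
  move=> /(_ ltac:(lra) ltac:(lra)) key.
  have -> : ((a + l) `^ al - a `^ al) / al - l * (b `^ al - a `^ al) / (al * (b - a)) =
    (((a + l) `^ al - a `^ al) * (b - a) - l * (b `^ al - a `^ al)) / (al * (b - a)).
    by field; rewrite (gt_eqF al0) (gt_eqF ba).
  by rewrite divr_ge0 ?subr_ge0 ?mulr_ge0 ?(ltW al0) ?(ltW ba).
Qed.

End powR_facts.

Section powR_integral.
Variable R : realType.
Implicit Types al p x y : R.
Local Notation mu := (@lebesgue_measure R).

Lemma measurable_powR_EFin p (D : set R) : measurable_fun D (fun t : R => (t `^ p)%:E).
Proof.
by apply/measurable_EFinP/measurable_funTS; exact: measurable_powR.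
Qed.

Lemma integral_powR_itv_gt0 al x y : 0 < al -> 0 < x -> x <= y ->
  (\int[mu]_(t in `[x, y]) (t `^ (al - 1))%:E = ((y `^ al - x `^ al) / al)%:E)%E.
Proof.
move=> al0 x0; rewrite le_eqVlt => /predU1P[<-|xy].
  by rewrite set_itv1 integral_set1 subrr mul0r.
have dw : {in `[x, y], forall t, derivable (fun t : R => t `^ (al - 1)) t 1}.
  move=> t; rewrite in_itv/= => /andP[xt _].
  apply: derivable_powR; rewrite in_itv/= andbT; exact: lt_le_trans x0 xt.
have iw : mu.-integrable `[x, y] (EFin \o (fun t : R => t `^ (al - 1))).
  apply: continuous_compact_integrable; first exact: segment_compact.
  exact: derivable_within_continuous.
have cw : {within `[x, y], continuous (fun t : R => al * t `^ (al - 1))}.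
  apply: derivable_within_continuous => t tI.
  by apply: derivableM; [exact: derivable_cst | exact: dw].
have F' : {in `]x, y[, (@powR R ^~ al)^`()%classic =1 (fun t => al * t `^ (al - 1))}.
  move=> t; rewrite in_itv/= => /andP[xt _]; apply: powR_derive1.
  by rewrite in_itv/= andbT; exact: lt_trans x0 xt.
have := continuous_FTC2 xy cw (powR_derivable_oo_LRcontinuous al0 (ltW x0) xy) F'.
under eq_integral do rewrite EFinM.
rewrite integralZl//.
have : (\int[mu]_(t in `[x, y]) (t `^ (al - 1))%:E)%E \is a fin_num.
  exact: integrable_fin_num iw.
move: (\int[_]_(_ in _) _)%E => [r _||] //.
rewrite -EFinM -EFinB => -[<-].
by rewrite [al * r]mulrC mulfK ?gt_eqF.
Qed.

Lemma integral_powR_itv_oc0_le al y : 0 < al -> 0 < y ->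
  (\int[mu]_(t in `]0%R, y]) (t `^ (al - 1))%:E <= ((y `^ al) / al)%:E)%E.
Proof.
move=> al0 y0.
pose F n : set R := [set` `[y / n.+1%:R, y]].
have Fpos n : 0 < y / n.+1%:R by rewrite divr_gt0// ltr0n.
have bigF : \bigcup_n F n = [set` `]0%R, y]].
  apply/seteqP; split.
    move=> t [n _]; rewrite /F /= !in_itv/= => /andP[h ->]; rewrite andbT.
    exact: lt_le_trans (Fpos n) h.
  move=> t; rewrite /= in_itv/= => /andP[t0 ty].
  exists (Num.truncn (y / t)) => //; rewrite /F /= in_itv/= ty andbT.
  rewrite ler_pdivrMr ?ltr0n// mulrC -ler_pdivrMr//.
  exact/ltW/truncnS_gt.
have ndF : {homo F : n m / (n <= m)%N >-> (n <= m)%O}.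
  apply/nondecreasing_seqP => n; rewrite subsetEset => t; rewrite /F /=.
  rewrite !in_itv/= => /andP[h ->]; rewrite andbT; apply: le_trans h.
  by rewrite ler_pM2l// lef_pV2 ?posrE ?ltr0n// ler_nat.
have := @ge0_nondecreasing_set_cvg_integral _ (measurableTypeR R) R F
  (fun t => (t `^ (al - 1))%:E) mu ndF (fun=> measurable_itv _)
  (fun n => @measurable_powR_EFin (al - 1) (F n)) (fun n t _ => powR_ge0 _ _).
rewrite bigF => cv.
rewrite -(cvg_lim _ cv) //; apply: lime_le; first by apply/cvg_ex; eexists; exact: cv.
apply: nearW => n /=; rewrite integral_powR_itv_gt0 ?lee_fin ?ler_pM2r ?invr_gt0//.
  by rewrite gerBl powR_ge0.
by rewrite ler_pdivrMr ?ltr0n// ler_peMr ?ler1n // ltW.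
Qed.

(* The integrals over [[e, y]] give the matching lower bound as [e] tends to 0;
   [e] is chosen so that [e ^ al <= al * eps]. *)
Lemma integral_powR_itv0 al y : 0 < al -> 0 < y ->
  (\int[mu]_(t in `[0%R, y]) (t `^ (al - 1))%:E = ((y `^ al) / al)%:E)%E.
Proof.
move=> al0 y0; rewrite -integral_itv_obnd_cbnd; last exact: measurable_powR_EFin.
have := integral_powR_itv_oc0_le al0 y0.
have : (0 <= \int[mu]_(t in `]0%R, y]) (t `^ (al - 1))%:E)%E.
  by apply: integral_ge0 => t _; rewrite lee_fin powR_ge0.
have Sge e : 0 < e -> e <= y ->
    (((y `^ al - e `^ al) / al)%:E <= \int[mu]_(t in `]0%R, y]) (t `^ (al - 1))%:E)%E.
  move=> e0 ey; rewrite -integral_powR_itv_gt0//.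
  apply: ge0_subset_integral => //; first exact: measurable_powR_EFin.
    by move=> t _; rewrite lee_fin powR_ge0.
  move=> t /=; rewrite !in_itv/= => /andP[et ->]; rewrite andbT.
  exact: lt_le_trans e0 et.
move: (\int[_]_(_ in _) _)%E Sge => [r||] //= Sge _; rewrite lee_fin => Sle.
congr EFin; apply/eqP; rewrite eq_le Sle /=.
apply/ler_addgt0Pr => eps eps0.
pose e := Num.min y ((al * eps) `^ al^-1).
have ae0 : 0 < al * eps by rewrite mulr_gt0.
have e0 : 0 < e by rewrite lt_min y0 powR_gt0.
have eal : e `^ al <= al * eps.
  have -> : al * eps = ((al * eps) `^ al^-1) `^ al.
    by rewrite -powRrM mulVf ?gt_eqF// powRr1// ltW.
  apply: ge0_ler_powR; rewrite ?nnegrE ?powR_ge0 ?(ltW al0) ?(ltW e0)//.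
  by rewrite ge_min lexx orbT.
have := Sge e e0 ltac:(by rewrite ge_min lexx); rewrite lee_fin.
rewrite -lerBlDr; apply: le_trans.
have -> : y `^ al / al - eps = (y `^ al - al * eps) / al by field; rewrite gt_eqF.
by apply: ler_wpM2r; rewrite ?invr_ge0 ?(ltW al0)// lerD2l lerN2.
Qed.

Lemma integral_powR_itv al x y : 0 < al -> 0 <= x -> x <= y ->
  (\int[mu]_(t in `[x, y]) (t `^ (al - 1))%:E = ((y `^ al - x `^ al) / al)%:E)%E.
Proof.
move=> al0; rewrite le_eqVlt => /predU1P[<-|x0] xy; last exact: integral_powR_itv_gt0.
move: xy; rewrite le_eqVlt => /predU1P[<-|y0].
  by rewrite set_itv1 integral_set1 subrr mul0r.
by rewrite integral_powR_itv0// powR0 ?gt_eqF// subr0.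
Qed.

Lemma integrable_powR_itv al x y : 0 < al -> 0 <= x -> x <= y ->
  mu.-integrable `[x, y] (fun t => (t `^ (al - 1))%:E).
Proof.
move=> al0 x0 xy; apply/integrableP; split; first exact: measurable_powR_EFin.
under eq_integral => t _ do rewrite gee0_abs ?lee_fin ?powR_ge0//.
by rewrite integral_powR_itv// ltry.
Qed.

Lemma Rintegral_powR_itv al x y : 0 < al -> 0 <= x -> x <= y ->
  Rintegral mu `[x, y] (fun t => t `^ (al - 1)) = (y `^ al - x `^ al) / al.
Proof. by move=> al0 x0 xy; rewrite /Rintegral integral_powR_itv. Qed.

End powR_integral.

Section integrable_EFin.
Context d (T : measurableType d) (R : realType) (mu : {measure set T -> \bar R}).
Variable D : set T.
Hypothesis mD : measurable D.

Lemma integrableD_EFin (h1 h2 : T -> R) : mu.-integrable D (EFin \o h1) ->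
  mu.-integrable D (EFin \o h2) -> mu.-integrable D (EFin \o (fun x => h1 x + h2 x)).
Proof.
by move=> i1 i2; apply: eq_integrable (integrableD mD i1 i2) => // x _ /=; rewrite EFinD.
Qed.

Lemma integrableZl_EFin k (h1 : T -> R) : mu.-integrable D (EFin \o h1) ->
  mu.-integrable D (EFin \o (fun x => k * h1 x)).
Proof.
by move=> i1; apply: eq_integrable (integrableZl mD k i1) => // x _ /=; rewrite EFinM.
Qed.

Lemma integrableB_EFin (h1 h2 : T -> R) : mu.-integrable D (EFin \o h1) ->
  mu.-integrable D (EFin \o h2) -> mu.-integrable D (EFin \o (fun x => h1 x - h2 x)).
Proof.
by move=> i1 i2; apply: eq_integrable (integrableB mD i1 i2) => // x _ /=; rewrite EFinB.
Qed.

End integrable_EFin.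

Section restricted_integrals.
Variable R : realType.
Local Notation mu := (@lebesgue_measure R).

Lemma integrable_patch_itv x y c d (h : R -> R) : x <= c -> d <= y ->
  mu.-integrable `[x, y] (EFin \o h) ->
  mu.-integrable `[x, y] (EFin \o h \_ `[c, d]).
Proof.
move=> xc dy ih; rewrite -restrict_EFin.
apply/integrable_restrict => //.
by apply: integrableS ih => //; exact: measurableI.
Qed.

Lemma Rintegral_patch_itv x y c d (h : R -> R) : x <= c -> d <= y ->
  Rintegral mu `[x, y] (h \_ `[c, d]) = Rintegral mu `[c, d] h.
Proof.
move=> xc dy; rewrite -Rintegral_mkcondr setIidr// => t /=.
by rewrite !in_itv/= => /andP[ct td]; rewrite (le_trans xc ct) (le_trans td dy).
Qed.

End restricted_integrals.

Section weighted_steffensen.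
Variables (R : realType) (a b : R) (f g w : R -> R).
Local Notation mu := (@lebesgue_measure R).
Local Notation integrable h := (mu.-integrable `[a, b] (EFin \o h)).

Hypothesis f_nonincr : forall x y, a <= x -> x <= y -> y <= b -> f y <= f x.
Hypothesis g01 : forall t, a <= t <= b -> 0 <= g t <= 1.
Hypothesis w_ge0 : forall t, a <= t <= b -> 0 <= w t.
Hypothesis wI : integrable w.
Hypothesis fwI : integrable (fun t => f t * w t).
Hypothesis gwI : integrable (fun t => g t * w t).
Hypothesis fgwI : integrable (fun t => f t * g t * w t).

Definition steffensen_bound c d k t :=
  ((fun t => f t * w t) \_ `[c, d]) t + k * (g t * w t - (w \_ `[c, d]) t).

Lemma integrable_steffensen_bound c d k : a <= c -> d <= b ->
  integrable (steffensen_bound c d k).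
Proof.
move=> ac db; apply: integrableD_EFin => //; first exact: integrable_patch_itv.
by apply: integrableZl_EFin => //; apply: integrableB_EFin => //; exact: integrable_patch_itv.
Qed.

Lemma Rintegral_steffensen_bound c d k : a <= c -> d <= b ->
  Rintegral mu `[a, b] (steffensen_bound c d k) =
  Rintegral mu `[c, d] (fun t => f t * w t) +
    k * (Rintegral mu `[a, b] (fun t => g t * w t) - Rintegral mu `[c, d] w).
Proof.
move=> ac db; have wcdI := integrable_patch_itv ac db wI.
rewrite RintegralD ?RintegralZl ?RintegralB// ?Rintegral_patch_itv//.
- exact: integrableB_EFin.
- exact: integrable_patch_itv.
- by apply: integrableZl_EFin => //; exact: integrableB_EFin.
Qed.

Lemma steffensen_lower c : a <= c -> c <= b ->
  Rintegral mu `[c, b] (fun t => f t * w t) +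
    f c * (Rintegral mu `[a, b] (fun t => g t * w t) - Rintegral mu `[c, b] w)
  <= Rintegral mu `[a, b] (fun t => f t * g t * w t).
Proof.
move=> ac cb; rewrite -Rintegral_steffensen_bound//.
apply: le_Rintegral => //; first exact: integrable_steffensen_bound.
move=> t; rewrite /= in_itv/= => /[dup] tab /andP[ta tb].
have /andP[g0 g1] := g01 tab; have wt := w_ge0 tab.
rewrite /steffensen_bound !patchE mem_setE in_itv/= tb andbT -subr_ge0.
case: (leP c t) => [ct|tc].
- have -> : f t * g t * w t - (f t * w t + f c * (g t * w t - w t)) =
    (f c - f t) * (1 - g t) * w t by ring.
  by rewrite !mulr_ge0 ?subr_ge0 ?f_nonincr.
- have -> : point = 0 :> R by [].
  have -> : f t * g t * w t - (0 + f c * (g t * w t - 0)) =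
    (f t - f c) * g t * w t by ring.
  by rewrite !mulr_ge0 ?subr_ge0 ?f_nonincr ?(ltW tc).
Qed.

Lemma steffensen_upper c : a <= c -> c <= b ->
  Rintegral mu `[a, b] (fun t => f t * g t * w t) <=
  Rintegral mu `[a, c] (fun t => f t * w t) +
    f c * (Rintegral mu `[a, b] (fun t => g t * w t) - Rintegral mu `[a, c] w).
Proof.
move=> ac cb; rewrite -Rintegral_steffensen_bound//.
apply: le_Rintegral => //; first exact: integrable_steffensen_bound.
move=> t; rewrite /= in_itv/= => /[dup] tab /andP[ta tb].
have /andP[g0 g1] := g01 tab; have wt := w_ge0 tab.
rewrite /steffensen_bound !patchE mem_setE in_itv/= ta -subr_ge0.
case: (leP t c) => [tc|ct].
- have -> : f t * w t + f c * (g t * w t - w t) - f t * g t * w t =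
    (f t - f c) * (1 - g t) * w t by ring.
  by rewrite !mulr_ge0 ?subr_ge0 ?f_nonincr.
- have -> : point = 0 :> R by [].
  have -> : 0 + f c * (g t * w t - 0) - f t * g t * w t =
    (f c - f t) * g t * w t by ring.
  by rewrite !mulr_ge0 ?subr_ge0 ?f_nonincr ?(ltW ct).
Qed.

End weighted_steffensen.

Lemma powR_mulK (R : realType) (p t : R) : 0 <= t ->
  t `^ p * t `^ p * t `^ (- p) = t `^ p.
Proof.
rewrite le_eqVlt => /predU1P[<-|t0].
  have [->|p0] := eqVneq p 0; first by rewrite oppr0 powRr0 !mulr1.
  by rewrite powR0 ?mul0r.
rewrite -mulrA -powRD; last by rewrite (gt_eqF t0) implybT.
by rewrite subrr powRr0 mulr1.
Qed.

(* Only [f t^(alpha-1)] and [g t^(alpha-1)] are known to be measurable, hence the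
   factorisation [f g t^(alpha-1) = (f t^(alpha-1)) (g t^(alpha-1)) t^(1-alpha)],
   which [powR_mulK] makes valid at [t = 0] as well. *)
Lemma frac_integrableM (R : realType) (alpha a b : R) (f g : R -> R) : 0 <= a ->
  (forall t, a <= t <= b -> `|g t| <= 1) ->
  frac_integrable alpha a b f -> frac_integrable alpha a b g ->
  frac_integrable alpha a b (fun t => f t * g t).
Proof.
move=> a0 g1 fI gI; apply: (le_integrable _ _ _ fI) => //.
- apply/measurable_EFinP.
  apply: (eq_measurable_fun (fun t => frac_integrand alpha f t *
    frac_integrand alpha g t * t `^ (- (alpha - 1)))).
    move=> t; rewrite inE/= in_itv/= => /andP[ta _].
    rewrite /frac_integrand -[in RHS](powR_mulK (alpha - 1) (le_trans a0 ta)).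
    ring.
  apply: measurable_funM.
    by apply: measurable_funM; apply/measurable_EFinP; [case/integrableP: fI | case/integrableP: gI].
  exact: measurable_funTS (measurable_powR _).
- move=> t; rewrite /= in_itv/= => tab; rewrite lee_fin /frac_integrand.
  by rewrite -mulrA [g t * _]mulrC mulrA normrM ler_piMr ?g1.
Qed.

Theorem mainTheorem5 (R : realType) (alpha a b : R) (f g : R -> R) :
  0 < alpha -> alpha <= 1 -> 0 <= a -> a < b ->
  (forall t, a <= t <= b -> 0 <= f t) ->
  (forall t, a <= t <= b -> 0 <= g t <= 1) ->
  frac_integrable alpha a b f ->
  frac_integrable alpha a b g ->
  (forall x y, a <= x -> x <= y -> y <= b -> f y <= f x) ->
  let l := alpha * (b - a) / (b `^ alpha - a `^ alpha) * frac_int alpha a b g in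
  frac_int alpha (b - l) b f <= frac_int alpha a b (fun t => f t * g t) /\
  frac_int alpha a b (fun t => f t * g t) <= frac_int alpha a (a + l) f.
Proof.
move=> al0 al1 a0 ab f0 g01 fI gI f_nonincr l.
have w0 t : a <= t <= b -> 0 <= t `^ (alpha - 1) by rewrite powR_ge0.
have wI := integrable_powR_itv al0 a0 (ltW ab).
have fgI : frac_integrable alpha a b (fun t => f t * g t).
  by apply: frac_integrableM => // t /g01 /andP[g0 g1]; rewrite ger0_norm.
have GW : 0 <= frac_int alpha a b g <= (b `^ alpha - a `^ alpha) / alpha.
  apply/andP; split.
    apply: Rintegral_ge0 => t /=.
    by rewrite in_itv/= => /g01/andP[g0 _]; rewrite mulr_ge0 ?powR_ge0.
  rewrite -Rintegral_powR_itv ?(ltW ab)//; apply: le_Rintegral => //.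
  by move=> t /=; rewrite in_itv/= => /g01/andP[g0 g1]; rewrite ler_piMl ?powR_ge0.
have /= := powR_steffensen_length al0 al1 a0 ab GW.
rewrite -/l => -[l0 lba tail_le head_ge].
split.
- apply: le_trans (steffensen_lower f_nonincr g01 w0 wI fI gI fgI (c := b - l) _ _); [|lra|lra].
  rewrite lerDl Rintegral_powR_itv; [|lra|lra|lra].
  by rewrite mulr_ge0 ?f0 ?subr_ge0 //; lra.
- apply: le_trans (steffensen_upper f_nonincr g01 w0 wI fI gI fgI (c := a + l) _ _) _; [lra|lra|].
  rewrite gerDl Rintegral_powR_itv; [|lra|lra|lra].
  by rewrite mulr_ge0_le0 ?f0 ?subr_le0 //; lra.
Qed.
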